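(* Let $G=(V,E)$ be an unweighted connected graph with $n$ vertices, and let $s,t\in V$ be distinct. Then $$ \frac{2}{n^{2}}\leq B_{st}^{2}. $$
   Context: $L=D-A$ is the Laplacian of the unweighted graph $G$, $L^{+}$ its Moore–Penrose pseudoinverse, $L^{2+}=(L^+)^2$, and $1_v$ the indicator vector of vertex $v$. The biharmonic distance is $B_{st}=\sqrt{(1_s-1_t)^{T}L^{2+}(1_s-1_t)}$. *)

From mathcomp Require Import all_boot all_order all_algebra.
Set Implicit Arguments.
Unset Strict Implicit.
Unset Printing Implicit Defensive.
Import Order.TTheory GRing.Theory Num.Theory.
Local Open Scope ring_scope.

Definition simple_graph (n : nat) (e : rel 'I_n) : Prop :=
  symmetric e /\ irreflexive e.

Definition connected_graph (n : nat) (e : rel 'I_n) : Prop :=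
  forall x y : 'I_n, connect e x y.

Definition deg (n : nat) (e : rel 'I_n) (i : 'I_n) : nat := #|[set j | e i j]|.

Definition laplacian (R : nzRingType) (n : nat) (e : rel 'I_n) : 'M[R]_n :=
  \matrix_(i, j) ((if i == j then (deg e i)%:R else 0) - (if e i j then 1 else 0)).

(* X is the Moore--Penrose pseudoinverse of A (the four Penrose equations;
   the pseudoinverse is the unique matrix satisfying them). *)
Definition is_MP_pinv (R : nzRingType) (n : nat) (A X : 'M[R]_n) : Prop :=
  [/\ A *m X *m A = A, X *m A *m X = X,
      (A *m X)^T = A *m X & (X *m A)^T = X *m A].

Definition ind (R : nzRingType) (n : nat) (v : 'I_n) : 'cV[R]_n := delta_mx v 0.

Definition biharmonic_sq (R : nzRingType) (n : nat) (Lp : 'M[R]_n) (s t : 'I_n) : R :=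
  (((ind R s - ind R t)^T *m (Lp *m Lp) *m (ind R s - ind R t)) 0 0).

From mathcomp Require Import all_boot all_order all_algebra.
From mathcomp Require Import ring lra.
Import Order.TTheory GRing.Theory Num.Theory.
Set Implicit Arguments.
Unset Strict Implicit.
Local Open Scope ring_scope.

(* Put x = 1_s - 1_t and y = L^+ x, so that B_st^2 = |y|^2.  As G is
   connected, ker L is spanned by the all-ones vector, to which x is
   orthogonal; hence L y = x and x^T L y = |x|^2 = 2.  The Laplacian form
   v^T L v = 1/2 sum_{ij} e_ij (v_i - v_j)^2 is positive semidefinite and
   at most n |v|^2, so Cauchy-Schwarz for it gives
   4 = (x^T L y)^2 <= (x^T L x) (y^T L y) <= 2n * n |y|^2. *)

Section DotProduct.
Variables (R : realFieldType) (n : nat).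
Implicit Types (u v p q : 'cV[R]_n) (A : 'M[R]_n).

Definition dotv u v : R := \sum_i u i 0 * v i 0.

Lemma dotvE u v : (u^T *m v) 0 0 = dotv u v.
Proof. by rewrite mxE; apply: eq_bigr => i _; rewrite mxE. Qed.

Lemma dotvv_ge0 v : 0 <= dotv v v.
Proof. by apply: sumr_ge0 => i _; rewrite -expr2 sqr_ge0. Qed.

Lemma dotv_sym_mx A u v : A^T = A -> dotv u (A *m v) = dotv v (A *m u).
Proof.
move=> A_sym; rewrite -!dotvE.
have -> : (u^T *m (A *m v)) 0 0 = (u^T *m (A *m v))^T 0 0 by rewrite [RHS]mxE.
by rewrite !trmx_mul trmxK A_sym mulmxA.
Qed.

Lemma dotvBZ u v p q c :
  dotv (u - c *: v) (p - c *: q) =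
  dotv u p - c * dotv u q - c * dotv v p + c ^+ 2 * dotv v q.
Proof.
rewrite /dotv !mulr_sumr -!sumrB -big_split /=; apply: eq_bigr => i _.
by rewrite !mxE; ring.
Qed.

(* Cauchy-Schwarz for a positive semidefinite form, in the AM-GM shape that
   needs no square roots. *)
Lemma psd_dotv_AMGM A u v c : A^T = A -> (forall w, 0 <= dotv w (A *m w)) ->
  c * dotv u (A *m v) *+ 2 <= dotv u (A *m u) + c ^+ 2 * dotv v (A *m v).
Proof.
move=> A_sym A_psd; have := A_psd (u - c *: v).
by rewrite mulmxBr -scalemxAr dotvBZ (dotv_sym_mx v u A_sym); lra.
Qed.

Lemma sum_sqr_diff v :
  \sum_i \sum_j (v i 0 - v j 0) ^+ 2 =
  (n%:R * dotv v v - (\sum_i v i 0) ^+ 2) *+ 2.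
Proof.
have sumv2 : \sum_i v i 0 ^+ 2 = dotv v v.
  by apply: eq_bigr => i _; rewrite expr2.
transitivity (\sum_i (n%:R * v i 0 ^+ 2 + dotv v v
                       - (v i 0 * \sum_j v j 0) *+ 2)).
  apply: eq_bigr => i _; under eq_bigr do rewrite sqrrB.
  rewrite big_split sumrB /= sumr_const card_ord sumv2 sumrMnl -mulr_sumr.
  by rewrite -mulr_natl; ring.
rewrite sumrB big_split /= sumr_const card_ord sumrMnl.
by rewrite -mulr_suml -mulr_sumr sumv2 -mulr_natl; ring.
Qed.

End DotProduct.

Section MoorePenrose.
Variables (R : comNzRingType) (n : nat).
Implicit Types A X Y : 'M[R]_n.

Lemma is_MP_pinv_unique A X Y : is_MP_pinv A X -> is_MP_pinv A Y -> X = Y.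
Proof.
move=> [AXA XAX AX_sym XA_sym] [AYA YAY AY_sym YA_sym].
have AtYtAt : A^T = A^T *m Y^T *m A^T by rewrite -!trmx_mul mulmxA AYA.
have AX_AY : A *m X = A *m Y.
  rewrite -AX_sym trmx_mul AtYtAt !mulmxA -trmx_mul AX_sym.
  by rewrite -mulmxA -trmx_mul AY_sym mulmxA AXA.
have XA_YA : X *m A = Y *m A.
  rewrite -XA_sym trmx_mul AtYtAt -!mulmxA -trmx_mul XA_sym mulmxA.
  by rewrite -trmx_mul YA_sym !mulmxA -!(mulmxA Y) AXA.
by rewrite -XAX -mulmxA AX_AY mulmxA XA_YA YAY.
Qed.

Lemma is_MP_pinv_sym A X : A^T = A -> is_MP_pinv A X -> X^T = X.
Proof.
move=> A_sym [AXA XAX AX_sym XA_sym]; apply: (@is_MP_pinv_unique A) => //.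
split.
- by rewrite -[RHS]A_sym -[in RHS]AXA !trmx_mul A_sym mulmxA.
- by rewrite -[in RHS]XAX !trmx_mul A_sym mulmxA.
- by rewrite trmx_mul trmxK A_sym -XA_sym trmx_mul A_sym.
- by rewrite trmx_mul trmxK A_sym -AX_sym trmx_mul A_sym.
Qed.

Lemma mulmx_MP_pinv_sym A X : A^T = A -> is_MP_pinv A X -> A *m (A *m X) = A.
Proof.
move=> A_sym [AXA _ AX_sym _].
by have := congr1 trmx AXA; rewrite trmx_mul AX_sym A_sym.
Qed.

End MoorePenrose.

Section Laplacian.
Variables (R : realFieldType) (n : nat) (e : rel 'I_n).
Hypothesis e_sym : symmetric e.
Local Notation L := (laplacian R e).
Implicit Types (v w x : 'cV[R]_n) (X : 'M[R]_n).

Lemma deg_natr i : (deg e i)%:R = \sum_j (e i j)%:R :> R.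
Proof.
rewrite /deg -sum1_card natr_sum big_mkcond /=.
by apply: eq_bigr => j _; rewrite inE; case: (e i j).
Qed.

Lemma laplacianE v i : (L *m v) i 0 = \sum_j (e i j)%:R * (v i 0 - v j 0).
Proof.
rewrite mxE; under eq_bigr do rewrite mxE mulrBl.
rewrite sumrB (bigD1 i) //= eqxx big1 => [|j /negPf]; last first.
  by rewrite eq_sym => ->; rewrite mul0r.
rewrite addr0 deg_natr mulr_suml; under [RHS]eq_bigr do rewrite mulrBr.
rewrite sumrB; congr (_ - _); apply: eq_bigr => j _.
by case: (e i j); rewrite ?mul1r ?mul0r.
Qed.

Lemma laplacian_sym : L^T = L.
Proof.
by apply/matrixP => i j; rewrite !mxE e_sym eq_sym; case: eqP => // ->.
Qed.

Lemma sum_laplacian_mul v : \sum_i (L *m v) i 0 = 0.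
Proof.
under eq_bigr do
  (rewrite laplacianE; under eq_bigr do rewrite mulrBr; rewrite sumrB).
rewrite sumrB (exchange_big _ _ _ _ _ (fun i j => (e i j)%:R * v j 0)) /=.
apply/eqP; rewrite subr_eq0; apply/eqP/eq_bigr => i _.
by apply: eq_bigr => j _; rewrite e_sym.
Qed.

Lemma laplacian_dotvE v :
  dotv v (L *m v) *+ 2 = \sum_i \sum_j (e i j)%:R * (v i 0 - v j 0) ^+ 2.
Proof.
have -> : dotv v (L *m v) =
          \sum_i \sum_j (e i j)%:R * (v i 0 * (v i 0 - v j 0)).
  apply: eq_bigr => i _; rewrite laplacianE mulr_sumr.
  by apply: eq_bigr => j _; ring.
rewrite mulr2n {1}exchange_big /= -big_split /=; apply: eq_bigr => i _.
by rewrite -big_split /=; apply: eq_bigr => j _; rewrite e_sym; ring.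
Qed.

Lemma laplacian_psd v : 0 <= dotv v (L *m v).
Proof.
rewrite -(pmulrn_lge0 _ (isT : (0 < 2)%N)) laplacian_dotvE.
by do 2!apply: sumr_ge0 => ? _; rewrite mulr_ge0 ?ler0n ?sqr_ge0.
Qed.

Lemma laplacian_dotv_le v : dotv v (L *m v) <= n%:R * dotv v v.
Proof.
have drop_e : \sum_i \sum_j (e i j)%:R * (v i 0 - v j 0) ^+ 2 <=
              \sum_i \sum_j (v i 0 - v j 0) ^+ 2 :> R.
  do 2!apply: ler_sum => ? _.
  by case: (e _ _); rewrite ?mul1r ?mul0r ?sqr_ge0.
move: drop_e; rewrite -laplacian_dotvE sum_sqr_diff.
by have := sqr_ge0 (\sum_i v i 0); lra.
Qed.

Hypothesis e_conn : connected_graph e.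

Lemma laplacian_ker_const w : L *m w = 0 -> forall i j, w i 0 = w j 0.
Proof.
move=> Lw0.
have sum_eq0 : \sum_i \sum_j (e i j)%:R * (w i 0 - w j 0) ^+ 2 = 0 :> R.
  rewrite -laplacian_dotvE Lw0 /dotv big1 ?mul0rn // => i _.
  by rewrite mxE mulr0.
have term_ge0 i j : 0 <= (e i j)%:R * (w i 0 - w j 0) ^+ 2 :> R.
  by rewrite mulr_ge0 ?ler0n ?sqr_ge0.
have edge_eq i j : e i j -> w i 0 = w j 0.
  move=> eij.
  have row_eq0 := psumr_eq0P
    (fun i _ => sumr_ge0 _ (fun j _ => term_ge0 i j)) sum_eq0.
  have := psumr_eq0P (fun j _ => term_ge0 i j) (row_eq0 i isT) (i := j) isT.
  by rewrite eij mul1r => /eqP; rewrite sqrf_eq0 subr_eq0 => /eqP.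
move=> i j; have /connectP [p ep ->] := e_conn i j.
by elim: p i ep => //= k p IHp i /andP [eik ep]; rewrite (edge_eq _ _ eik) IHp.
Qed.

Lemma laplacian_mul_eq0 w : L *m w = 0 -> \sum_i w i 0 = 0 -> w = 0.
Proof.
move=> Lw0 sum_w0; apply/matrixP => i j; rewrite (ord1 j) mxE.
have : \sum_k w k 0 = n%:R * w i 0.
  transitivity (\sum_(k < n) w i 0).
    by apply: eq_bigr => k _; apply: laplacian_ker_const.
  by rewrite sumr_const card_ord mulr_natl.
have n_gt0 : (0 < n)%N := leq_ltn_trans (leq0n i) (ltn_ord i).
rewrite sum_w0 => /esym /eqP.
by rewrite mulf_eq0 pnatr_eq0 eqn0Ngt n_gt0 => /eqP.
Qed.

Lemma laplacian_pinv_mulK X x :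
  is_MP_pinv L X -> \sum_i x i 0 = 0 -> L *m (X *m x) = x.
Proof.
move=> X_pinv sum_x0; set w := x - L *m (X *m x).
have Lw0 : L *m w = 0.
  rewrite mulmxBr !mulmxA -(mulmxA L).
  by rewrite (mulmx_MP_pinv_sym laplacian_sym X_pinv) subrr.
have sum_w0 : \sum_i w i 0 = 0.
  rewrite (eq_bigr (fun i => x i 0 - (L *m (X *m x)) i 0)) => [|i _].
    by rewrite sumrB sum_x0 sum_laplacian_mul subrr.
  by rewrite !mxE.
by apply/eqP; rewrite eq_sym -subr_eq0 -/w (laplacian_mul_eq0 Lw0 sum_w0).
Qed.

End Laplacian.

Section Indicators.
Variables (R : realFieldType) (n : nat).
Implicit Types s t v : 'I_n.

Lemma sum_ind v : \sum_i ind R v i 0 = 1.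
Proof.
rewrite (bigD1 v) //= big1 ?addr0 => [|i /negPf niv]; last by rewrite mxE niv.
by rewrite mxE !eqxx.
Qed.

Lemma sum_ind_sub s t : \sum_i (ind R s - ind R t) i 0 = 0.
Proof.
rewrite (eq_bigr (fun i => ind R s i 0 - ind R t i 0)) => [|i _].
  by rewrite sumrB !sum_ind subrr.
by rewrite !mxE.
Qed.

Lemma dotv_ind_sub s t :
  s != t -> dotv (ind R s - ind R t) (ind R s - ind R t) = 2.
Proof.
move=> st; rewrite -dotvE /ind (linearB trmx) /= !trmx_delta mulmxBl !mulmxBr.
rewrite !mul_delta_mx_cond !eqxx (negPf st) eq_sym (negPf st) !mulr0n !mulr1n.
by rewrite !mxE /=; ring.
Qed.

End Indicators.

Theorem theoremA1 (R : realFieldType) (n : nat) (e : rel 'I_n)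
    (Lp : 'M[R]_n) (s t : 'I_n) :
  simple_graph e -> connected_graph e ->
  is_MP_pinv (laplacian R e) Lp ->
  s != t ->
  2 / (n%:R ^+ 2) <= biharmonic_sq Lp s t.
Proof.
move=> [e_sym _] e_conn Lp_pinv st.
have L_sym := laplacian_sym R e_sym.
set L := laplacian R e in L_sym Lp_pinv *.
set x := ind R s - ind R t; set y := Lp *m x.
have n_gt0 : 0 < n%:R :> R.
  by rewrite ltr0n (leq_ltn_trans (leq0n s) (ltn_ord s)).
have -> : biharmonic_sq Lp s t = dotv y y.
  rewrite /biharmonic_sq -dotvE trmx_mul.
  by rewrite (is_MP_pinv_sym L_sym Lp_pinv) !mulmxA.
have xLy : dotv x (L *m y) = 2.
  by rewrite /y laplacian_pinv_mulK ?sum_ind_sub ?dotv_ind_sub.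
have := psd_dotv_AMGM x y n%:R L_sym (laplacian_psd e_sym).
have := laplacian_dotv_le e_sym x; have := laplacian_dotv_le e_sym y.
rewrite xLy dotv_ind_sub // ler_pdivrMr ?exprn_gt0 //.
have := dotvv_ge0 y; nra.
Qed.
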